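(* Let $\mathcal D$ be a finite domain. (i) The law of $\sigma_r$ under $\mu_{\mathcal D}$ is $\nu_{\mathcal D}(\sigma_r)=\frac1{Z_{\mathcal D}}2^{k(\theta(\sigma_r))}$ for $\sigma_r\in\{+,-\}^{F(\mathcal D)}$, where $Z_{\mathcal D}$ is a normalising constant. (ii) Conditionally on $\sigma_r$, the law of $\sigma_b$ under $\mu_{\mathcal D}$ is obtained by assigning to each connected component of $\theta(\sigma_r)$ a spin in $\{+,-\}$ uniformly and independently, and giving all faces of that component this blue spin.
   Context: $\mathbb H$ is the hexagonal lattice and $\mathbb T$ the dual triangular lattice (vertices = faces of $\mathbb H$). A domain is a subgraph $\mathcal D$ of $\mathbb H$ without isolated vertices for which there exists a self-avoiding polygon $\partial_E\mathcal D$ such that $E(\mathcal D)$ is the set of edges in the bounded component of $\mathbb H\setminus\partial_E\mathcal D$; $F(\mathcal D)$ is the set of faces adjacent to an edge of $\mathcal D$, and $\mathcal D^*$ is the subgraph of $\mathbb T$ induced by $F(\mathcal D)$. A pair $(\sigma_r,\sigma_b)\in\{+,-\}^{F(\mathcal D)}\times\{+,-\}^{F(\mathcal D)}$ is coherent if for all adjacent faces $u,v\in F(\mathcal D)$, $\sigma_r(u)=\sigma_r(v)$ or $\sigma_b(u)=\sigma_b(v)$; $\mu_{\mathcal D}$ is uniform on coherent pairs and $\nu_{\mathcal D}$ is the law of $\sigma_r$. For $\sigma\in\{+,-\}^{F(\mathcal D)}$, $\theta(\sigma)$ is the spanning subgraph of $\mathcal D^*$ with edge set $\{uv\in E(\mathcal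 D^* ):\sigma(u)\ne\sigma(v)\}$, and $k(\theta(\sigma))$ is its number of connected components (isolated vertices counted). *)

From HB Require Import structures.
From mathcomp Require Import all_boot all_order all_algebra finmap.
Set Implicit Arguments. Unset Strict Implicit. Unset Printing Implicit Defensive.
Import Order.TTheory GRing.Theory Num.Theory.
Local Open Scope ring_scope.


Definition Tadj (u v : int * int) : bool :=
  let d := (v.1 - u.1, v.2 - u.2) in
  [|| d == (1, 0), d == (-1, 0), d == (0, 1), d == (0, -1),
      d == (1, -1) | d == (-1, 1)].

(* (x,y,false) : up-triangle {(x,y),(x+1,y),(x,y+1)},
   (x,y,true)  : down-triangle {(x+1,y),(x,y+1),(x+1,y+1)} *)
Definition Hvert := (int * int * bool)%type.

Definition tri (a : Hvert) : seq (int * int) :=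
  let: (x, y, b) := a in
  if b then [:: (x + 1, y); (x, y + 1); (x + 1, y + 1)]
  else [:: (x, y); (x + 1, y); (x, y + 1)].

Definition Hadj (a b : Hvert) : bool :=
  (a != b) && (count (mem (tri b)) (tri a) == 2%N).

(* faces of H adjacent to the edge ab of H: the two endpoints of the dual T-edge *)
Definition face_of_edge (a b : Hvert) (f : int * int) : bool :=
  (f \in tri a) && (f \in tri b).

Definition sa_polygon (p : seq Hvert) : bool :=
  [&& uniq p, (3 <= size p)%N & cycle Hadj p].

Definition poly_edges (p : seq Hvert) : seq (Hvert * Hvert) := zip p (rot 1 p).

Definition on_poly (p : seq Hvert) (a b : Hvert) : bool :=
  ((a, b) \in poly_edges p) || ((b, a) \in poly_edges p).

Definition crossed (p : seq Hvert) (u v : int * int) : bool :=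
  has (fun e => face_of_edge e.1 e.2 u && face_of_edge e.1 e.2 v) (poly_edges p).

Definition Tstep (p : seq Hvert) (u v : int * int) : bool :=
  Tadj u v && ~~ crossed p u v.

(* face x lies in the bounded component of R^2 \ p : the set of faces
   reachable from x without crossing p is bounded (finite) *)
Definition inside (p : seq Hvert) (x : int * int) : Prop :=
  exists N : nat, forall s, path (Tstep p) x s ->
    forall y, y \in s -> ((`|y.1| <= N)%N && (`|y.2| <= N)%N).

(* ab is an edge of the domain D bounded by p : an edge of H, not on p,
   lying in the bounded component (its adjacent faces are inside) *)
Definition D_edge (p : seq Hvert) (a b : Hvert) : Prop :=
  [/\ Hadj a b, ~~ on_poly p a b &
      forall f, face_of_edge a b f -> inside p f].

Definition D_face (p : seq Hvert) (f : int * int) : Prop :=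
  exists a b, D_edge p a b /\ face_of_edge a b f.

(* ---------- spins on F(D) (true = +, false = -) ---------- *)
Section Spins.
Variable F : {fset (int * int)}.

Definition spin := {ffun F -> bool}.

Definition coherent (sr sb : spin) : bool :=
  [forall u : F, forall v : F,
     Tadj (val u) (val v) ==> (sr u == sr v) || (sb u == sb v)].

Definition coh_pairs : {set spin * spin} :=
  [set x : spin * spin | coherent x.1 x.2].

Definition muD (sr sb : spin) : rat :=
  if coherent sr sb then (#|coh_pairs|%:R)^-1 else 0.

Definition nuD (sr : spin) : rat := \sum_(sb : spin) muD sr sb.

Definition theta (s : spin) : rel F :=
  fun u v => Tadj (val u) (val v) && (s u != s v).

(* k(theta(sigma)) : number of connected components (isolated vertices counted) *)
Definition kcomp (s : spin) : nat := n_comp (theta s) (@predT F).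

Definition comp_const (sr sb : spin) : bool :=
  [forall u : F, forall v : F, connect (theta sr) u v ==> (sb u == sb v)].
End Spins.

From HB Require Import structures.
From mathcomp Require Import all_boot all_order all_algebra finmap.
Set Implicit Arguments. Unset Strict Implicit. Unset Printing Implicit Defensive.
Import Order.TTheory GRing.Theory Num.Theory.
Local Open Scope ring_scope.

(* A pair (sr, sb) is coherent iff sb is constant along every edge of
   theta(sr), i.e. on every connected component of theta(sr).  Hence for a
   fixed sr there are exactly 2 ^ k(theta(sr)) coherent partners sb, which
   gives nu_D(sr) = 2 ^ k(theta(sr)) / #|coherent pairs|, and mu_D(. | sr)
   is uniform on the 2 ^ k(theta(sr)) componentwise constant colourings.
   Nothing about the domain is used: this holds for any finite set of faces. *)

Lemma connect_invariant (T : finType) (U : eqType) (e : rel T) (f : T -> U) :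
  (forall x y, e x y -> f x = f y) -> forall x y, connect e x y -> f x = f y.
Proof.
move=> f_e x y e_xy.
have cl_fx : closed e [pred z | f z == f x] by move=> u v /f_e; rewrite !inE => ->.
by have := closed_connect cl_fx e_xy; rewrite !inE eqxx => /esym/eqP.
Qed.

Section ComponentConstant.
Variables (T U : finType) (e : rel T).
Hypothesis e_sym : connect_sym e.

Definition component_constant (f : {ffun T -> U}) : bool :=
  [forall u, forall v, connect e u v ==> (f u == f v)].

Let root_of (x : T) : {x : T | roots e x} :=
  exist _ (fingraph.root e x) (roots_root e_sym x).

Definition lift_from_roots (g : {ffun {x : T | roots e x} -> U}) : {ffun T -> U} :=
  [ffun x => g (root_of x)].

Lemma root_of_root (r : {x : T | roots e x}) : root_of (val r) = r.
Proof. by case: r => x r_x; apply: val_inj; apply/eqP. Qed.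

Lemma lift_from_roots_inj : injective lift_from_roots.
Proof.
move=> g1 g2 /ffunP eq_g; apply/ffunP => r.
by have := eq_g (val r); rewrite !ffunE root_of_root.
Qed.

Lemma component_constantE :
  [set f | component_constant f] = [set lift_from_roots g | g in {ffun _ -> U}].
Proof.
apply/setP => f; rewrite inE; apply/forallP/imsetP => [f_const | [g _ ->] u].
- exists [ffun r => f (val r)] => //; apply/ffunP => x; rewrite !ffunE /=.
  by apply/eqP; apply: (implyP (forallP (f_const x) _)); apply: connect_root.
- apply/forallP => v; apply/implyP; rewrite -(root_connect e_sym) => /eqP r_uv.
  by rewrite !ffunE; apply/eqP; congr (g _); apply: val_inj.
Qed.

Lemma card_component_constant :
  #|[set f | component_constant f]| = (#|U| ^ n_comp e (@predT T))%N.
Proof.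
rewrite component_constantE card_imset; last exact: lift_from_roots_inj.
rewrite card_ffun card_sig /n_comp_mem; congr (_ ^ _)%N.
by apply: eq_card => x; rewrite !inE andbT.
Qed.

End ComponentConstant.

Lemma Tadj_sym : symmetric Tadj.
Proof.
move=> [x1 y1] [x2 y2]; rewrite /Tadj /= !xpair_eqE.
rewrite -[x1 - x2]opprB -[y1 - y2]opprB !eqr_oppLR !oppr0 !opprK.
by do !case: (_ == _).
Qed.

Section Spins.
Variable F : {fset (int * int)}.

Lemma theta_sym (s : spin F) : connect_sym (theta s).
Proof. by apply: sym_connect_sym => u v; rewrite /theta Tadj_sym eq_sym. Qed.

Lemma coherentE (sr sb : spin F) :
  coherent sr sb = [forall u, forall v, theta sr u v ==> (sb u == sb v)].
Proof.
apply: eq_forallb => u; apply: eq_forallb => v.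
by rewrite /theta; case: (Tadj _ _); case: (sr u == sr v).
Qed.

Lemma coherent_comp_const (sr sb : spin F) : coherent sr sb = comp_const sr sb.
Proof.
rewrite coherentE; apply/forallP/forallP => sb_const u; apply/forallP => v.
- have sb_edge x y : theta sr x y -> sb x = sb y.
    by move/(implyP (forallP (sb_const x) y))/eqP.
  by apply/implyP => /(connect_invariant sb_edge) ->.
- by apply/implyP => /connect1; apply: (implyP (forallP (sb_const u) v)).
Qed.

Lemma card_coherent_partners (sr : spin F) :
  #|[set sb : spin F | coherent sr sb]| = (2 ^ kcomp sr)%N.
Proof.
rewrite -card_bool -(card_component_constant _ (theta_sym sr)).
by apply: eq_card => sb; rewrite !inE coherent_comp_const.
Qed.

Lemma coh_pairs_gt0 : (0 < #|coh_pairs F|)%N.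
Proof.
apply/card_gt0P; exists ([ffun=> true], [ffun=> true]); rewrite inE.
by apply/forallP => u; apply/forallP => v; rewrite !ffunE eqxx implybT.
Qed.

Lemma nuDE (sr : spin F) : nuD sr = 2%:R ^+ kcomp sr / #|coh_pairs F|%:R.
Proof.
rewrite /nuD /muD -big_mkcond /=.
rewrite (eq_bigl [in [set sb | coherent sr sb]]) => [|sb]; last by rewrite inE.
by rewrite sumr_const card_coherent_partners -natrX mulr_natl.
Qed.

End Spins.

Theorem proposition2p7 (p : seq Hvert) (hp : sa_polygon p)
  (F : {fset (int * int)}) (hF : forall f, f \in F <-> D_face p f) :
  (exists Z : rat, 0 < Z /\
     forall sr : spin F, nuD sr = (2%:R ^+ kcomp sr) / Z) /\
  (forall sr sb : spin F,
     muD sr sb / nuD sr =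
       (if comp_const sr sb then (2%:R ^+ kcomp sr)^-1 else 0)).
Proof.
have N_gt0 : 0 < #|coh_pairs F|%:R :> rat by rewrite ltr0n coh_pairs_gt0.
split; first by exists #|coh_pairs F|%:R; split; last exact: nuDE.
move=> sr sb; rewrite nuDE /muD coherent_comp_const.
case: ifP => _; last by rewrite mul0r.
by rewrite invfM invrK mulrCA mulVf ?mulr1 // gt_eqF.
Qed.
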